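(* Let $r_2\geq 3$ be an odd integer. Then there is no graph with parameters $(r_2,r_3)$ for any integer $r_3$ with $\binom{r_2-1}{2}<r_3<\binom{r_2}{2}$. Moreover, $K_{r_2+1}$ has parameters $(r_2,\binom{r_2}{2})$ and $K_{r_2}\square K_2$ has parameters $(r_2,\binom{r_2-1}{2})$.
   Context: All graphs are finite, simple and undirected. The $K_3$-degree of a vertex $v$ is the number of triangles containing $v$. A graph $G$ has parameters $(r_2,r_3)$ if every vertex has degree $r_2$ and every vertex has $K_3$-degree $r_3$. $K_n$ is the complete graph on $n$ vertices. The Cartesian product $G_1\square G_2$ has vertex set $V(G_1)\times V(G_2)$, with $(u,v)$ and $(u',v')$ adjacent iff either $u=u'$ and $vv'\in E(G_2)$, or $v=v'$ and $uu'\in E(G_1)$. *)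

From mathcomp Require Import all_boot.
Set Implicit Arguments. Unset Strict Implicit. Unset Printing Implicit Defensive.

Definition simple_graph (T : finType) (e : rel T) : Prop :=
  symmetric e /\ irreflexive e.

Definition nbhd (T : finType) (e : rel T) (v : T) : {set T} := [set w | e v w].
Definition degree (T : finType) (e : rel T) (v : T) : nat := #|nbhd e v|.

(* K3-degree: number of triangles containing v, i.e. number of 2-subsets
   {x,y} of the neighbourhood of v with x ~ y. *)
Definition k3_degree (T : finType) (e : rel T) (v : T) : nat :=
  #|[set S : {set T} | [&& #|S| == 2, S \subset nbhd e v &
        [forall x in S, forall y in S, (x != y) ==> e x y]]]|.

Definition has_params (T : finType) (e : rel T) (r2 r3 : nat) : Prop :=
  forall v : T, degree e v = r2 /\ k3_degree e v = r3.

Definition complete_rel (n : nat) : rel 'I_n := fun x y => x != y.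

Definition cart_rel (T1 T2 : finType) (e1 : rel T1) (e2 : rel T2) : rel (T1 * T2) :=
  fun u v => ((u.1 == v.1) && e2 u.2 v.2) || ((u.2 == v.2) && e1 u.1 v.1).
Arguments complete_rel n : clear implicits.

From mathcomp Require Import all_boot zify.
Set Implicit Arguments. Unset Strict Implicit. Unset Printing Implicit Defensive.

(* Let k be the common degree and q = k(k-1) - 2 r3, twice the number of
   non-adjacent pairs inside any neighbourhood; the range of r3 means
   0 < q < 2(k-1).  Fix a vertex v.  For a neighbour u of v, regularity gives
   |N(u) \ N[v]| = |N(v) \ N[u]|.  If some t outside N[v] sees m vertices of N(v)
   with 0 < m < k, counting non-adjacent pairs in N(t) and N(v) (when m >= 2), or
   in N(u) for the unique common neighbour u (when m = 1), gives q >= 2(k-1).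
   Otherwise every such t sees all of N(v) or nothing of it, so all u in N(v) have
   the same number d of non-neighbours in N(v) and q = k d; as q is even and k odd,
   d >= 2 and q >= 2k. *)

Lemma double_count (I J : finType) (X : {set I}) (Y : {set J}) (r : I -> J -> bool) :
  \sum_(x in X) #|[set y in Y | r x y]| = \sum_(y in Y) #|[set x in X | r x y]|.
Proof.
have cardE (K : finType) (Z : {set K}) (P : pred K) :
    #|[set z in Z | P z]| = \sum_(z in Z) P z.
  rewrite -sum1_card [RHS]big_mkcond [LHS]big_mkcond /=; apply: eq_bigr => z _.
  by rewrite inE; case: (z \in Z); case: (P z).
under eq_bigr do rewrite cardE.
by rewrite exchange_big /=; apply: eq_bigr => y _; rewrite cardE.
Qed.

Section Counting.
Variables (T : finType) (e : rel T).

Definition edges_in (A : {set T}) : {set {set T}} :=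
  [set S : {set T} | [&& #|S| == 2, S \subset A &
        [forall x in S, forall y in S, (x != y) ==> e x y]]].

Definition clique (A : {set T}) := {in A &, forall x y, x != y -> e x y}.

(* The prefix anti_ refers to the complement of the subgraph induced on A. *)
Definition deg_in (A : {set T}) a := #|[set b in A | (b != a) && e a b]|.
Definition anti_nbrs (A : {set T}) a := [set b in A | (b != a) && ~~ e a b].
Definition anti_deg (A : {set T}) a := #|anti_nbrs A a|.
Definition anti_vol (A : {set T}) := \sum_(a in A) anti_deg A a.
Definition anti_cross (B C : {set T}) := \sum_(b in B) #|[set c in C | ~~ e b c]|.

Lemma k3_degreeE v : k3_degree e v = #|edges_in (nbhd e v)|.
Proof. by []. Qed.

Lemma edges_inP (A S : {set T}) :
  reflect (exists x y, [/\ x != y, [set x; y] \subset A, e x y, e y x & S = [set x; y]])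
          (S \in edges_in A).
Proof.
rewrite inE; apply: (iffP and3P) => [[/cards2P[x [y [xy defS]]] sSA /forall_inP adjS]|].
  have adj u w : u \in S -> w \in S -> u != w -> e u w.
    by move=> uS wS; apply/implyP; exact: (forall_inP (adjS u uS) w wS).
  exists x, y; rewrite -defS; split=> //; apply: adj; rewrite ?defS ?inE ?eqxx ?orbT //.
  by rewrite eq_sym.
case=> x [y [xy sA exy eyx ->]]; split=> //; first by rewrite cards2 xy.
apply/forall_inP => u; rewrite !inE => /orP[]/eqP->; apply/forall_inP => w;
  by rewrite !inE => /orP[]/eqP->; rewrite ?eqxx ?exy ?eyx ?implybT.
Qed.

Lemma card_edges_in_clique (A : {set T}) : clique A -> #|edges_in A| = 'C(#|A|, 2).
Proof.
move=> clA; rewrite -cards_draws; apply: eq_card => S; rewrite !inE andbC -andbA.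
apply: andb_id2l => sSA; apply: andb_idl => _.
apply/forall_inP => x xS; apply/forall_inP => y yS; apply/implyP.
by apply: clA; apply: (subsetP sSA).
Qed.

Lemma edges_in_setU1_isolated x (A : {set T}) :
  {in A, forall y, ~~ e x y} -> edges_in (x |: A) = edges_in A.
Proof.
move=> isox; apply/setP => S; apply/edges_inP/edges_inP => -[y [z [yz sA eyz ezy ->]]];
  exists y, z; split=> //; last by apply: subset_trans sA (subsetU1 x A).
have inA u w : u \in x |: A -> w \in x |: A -> u != w -> e u w -> u \in A.
  rewrite !inE => /orP[/eqP-> | //] /orP[/eqP-> | wA]; first by rewrite eqxx.
  by move=> _ exw; have := isox w wA; rewrite exw.
move: sA; rewrite !subUset !sub1set => /andP[yxA zxA].
by rewrite (inA y z) ?(inA z y) // eq_sym.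
Qed.

Lemma anti_deg_add_deg_in (A : {set T}) a : a \in A -> anti_deg A a + deg_in A a = #|A|.-1.
Proof.
move=> aA; rewrite (cardsD1 a A) aA -(cardsID [set b | e a b] (A :\ a)).
rewrite [LHS]addnC; congr (_ + _); apply: eq_card => b; rewrite !inE.
  by rewrite andbCA andbA.
by case: (b \in A); case: (b != a); case: (e a b).
Qed.

Lemma anti_deg_sub (S M : {set T}) u : M \subset S -> u \in M ->
  anti_deg S u = anti_deg M u + #|[set c in S :\: M | ~~ e u c]|.
Proof.
move=> sMS uM; rewrite /anti_deg -(cardsID M (anti_nbrs S u)).
congr (_ + _); apply: eq_card => c; rewrite !inE.
  by case cM: (c \in M); rewrite ?andbF // andbT (subsetP sMS _ cM).
case cM: (c \in M) => //=; case: eqVneq => [cu | _] //.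
by rewrite cu uM in cM.
Qed.

Lemma sum_anti_deg_sub (S M : {set T}) : M \subset S ->
  \sum_(u in M) anti_deg S u = anti_vol M + anti_cross M (S :\: M).
Proof.
move=> sMS; rewrite /anti_vol /anti_cross -big_split; apply: eq_bigr => u.
exact: anti_deg_sub.
Qed.

Section Symmetric.
Hypothesis esym : symmetric e.

Lemma deg_in_edges_in (A : {set T}) a : a \in A ->
  deg_in A a = #|[set S in edges_in A | a \in S]|.
Proof.
move=> aA; have inj : {in [set b in A | (b != a) && e a b] &, injective (fun b => [set a; b])}.
  move=> b b'; rewrite !inE => /andP[_ /andP[ba _]] _ eqS.
  have : b \in [set a; b'] by rewrite -eqS !inE eqxx orbT.
  by rewrite !inE (negbTE ba) => /eqP.
rewrite /deg_in -(card_in_imset inj); apply: eq_card => S; rewrite [RHS]inE.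
apply/imsetP/andP => [[b] | [/edges_inP[x [y [xy sA exy eyx ->]]]]].
  rewrite inE => /andP[bA /andP[ba eab]] ->; split; last by rewrite !inE eqxx.
  apply/edges_inP; exists a, b; split=> //; first by rewrite eq_sym.
    by rewrite subUset !sub1set aA.
  by rewrite esym.
move: sA; rewrite subUset !sub1set => /andP[xA yA]; rewrite !inE => /orP[]/eqP->.
  by exists y; rewrite // !inE yA eq_sym xy.
by exists x; rewrite 1?setUC // !inE xA xy.
Qed.

Lemma anti_vol_edges_in (A : {set T}) : anti_vol A + 2 * #|edges_in A| = #|A| * #|A|.-1.
Proof.
have handshake : \sum_(a in A) deg_in A a = 2 * #|edges_in A|.
  under eq_bigr => a aA do rewrite deg_in_edges_in //.
  rewrite (double_count A (edges_in A) (fun a S => a \in S)) mulnC -sum_nat_const.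
  apply: eq_bigr => S /edges_inP[x [y [xy sA _ _ ->]]].
  transitivity #|[set x; y]|; last by rewrite cards2 xy.
  by apply: eq_card => b; rewrite inE; apply: andb_idl => /(subsetP sA).
rewrite -handshake -big_split -sum_nat_const; apply: eq_bigr => a.
exact: anti_deg_add_deg_in.
Qed.

Lemma anti_vol_even (A : {set T}) : ~~ odd (anti_vol A).
Proof.
move/(congr1 odd): (anti_vol_edges_in A); rewrite oddD mul2n odd_double addbF => ->.
by case: #|A| => //= n; rewrite oddM /= andNb.
Qed.

Lemma anti_cross_sym (B C : {set T}) :
  anti_cross B C = \sum_(c in C) #|[set b in B | ~~ e c b]|.
Proof.
rewrite /anti_cross double_count; apply: eq_bigr => c _.
by apply: eq_card => b; rewrite !inE esym.
Qed.

Lemma anti_vol_sub (B A : {set T}) : B \subset A ->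
  anti_vol B + 2 * anti_cross B (A :\: B) <= anti_vol A.
Proof.
move=> sBA; rewrite [anti_vol A](big_setID B) /= (setIidPr sBA) sum_anti_deg_sub //.
rewrite mul2n -addnn addnA leq_add2l anti_cross_sym; apply: leq_sum => a.
rewrite !inE => /andP[aB aA]; apply: subset_leq_card; apply/subsetP => b.
rewrite !inE => /andP[bB ->]; rewrite (subsetP sBA) //= andbT.
by apply: contraNneq aB => <-.
Qed.

Lemma anti_vol_pair a b : a != b -> ~~ e a b -> anti_vol [set a; b] = 2.
Proof.
have anti_deg_pair x y : x != y -> ~~ e x y -> anti_deg [set x; y] x = 1.
  move=> xy nxy; rewrite -(cards1 y); apply: eq_card => c; rewrite !inE.
  by case: (eqVneq c y) => [->|_]; rewrite ?orbT ?orbF 1?eq_sym ?xy ?nxy //; case: eqP.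
move=> ab nab; rewrite /anti_vol big_setU1 ?inE //= big_set1 anti_deg_pair //.
by rewrite setUC anti_deg_pair // 1?eq_sym // esym.
Qed.

End Symmetric.

Lemma card_nbhd_split u v : irreflexive e -> e u v ->
  #|nbhd e u| = (#|nbhd e u :&: nbhd e v| + anti_deg (nbhd e u) v).+1.
Proof.
move=> eirr euv; rewrite (cardsD1 v) inE euv -(cardsID (nbhd e v)).
congr (_ + _).+1; apply: eq_card => w; rewrite !inE.
  by case: eqVneq => [->|]; rewrite ?eirr ?andbF.
by case: (e v w); case: (w != v); case: (e u w).
Qed.

End Counting.

Section Regular.
Variables (T : finType) (e : rel T) (k q : nat).
Hypotheses (esym : symmetric e) (eirr : irreflexive e).
Hypothesis nbhd_card : forall x, #|nbhd e x| = k.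
Hypothesis anti_vol_nbhd : forall x, anti_vol e (nbhd e x) = q.

Local Notation N := (nbhd e).

Lemma anti_deg_nbhdC u v : e u v -> anti_deg e (N u) v = anti_deg e (N v) u.
Proof.
move=> euv; have := card_nbhd_split eirr euv; rewrite esym in euv.
have := card_nbhd_split eirr euv; rewrite !nbhd_card setIC; lia.
Qed.

Lemma anti_vol_ge_common_nbhd1 t v u :
  t != v -> ~~ e v t -> N t :&: N v = [set u] -> 2 * k.-1 <= q.
Proof.
move=> tv nevt Mu.
have /setIP[eut euv] : u \in N t :&: N v by rewrite Mu set11.
rewrite inE esym in eut; rewrite inE esym in euv.
have svt : [set v; t] \subset N u.
  by rewrite subUset !sub1set !inE euv eut.
have pair_bound := anti_vol_sub esym svt.
rewrite anti_vol_nbhd anti_vol_pair 1?eq_sym // /anti_cross in pair_bound.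
rewrite big_setU1 ?inE 1?eq_sym //= big_set1 in pair_bound.
set R := N u :\: [set v; t] in pair_bound *.
have t_anti : t \in anti_nbrs e (N u) v by rewrite !inE eut tv nevt.
have anti_v : #|anti_nbrs e (N u) v| <= #|[set c in R | ~~ e v c]|.+1.
  rewrite (cardsD1 t) t_anti ltnS; apply: subset_leq_card; apply/subsetP => c.
  by rewrite !inE => /and4P[ct -> cv ->]; rewrite negb_or cv ct.
have common_t : #|N u :&: N v| <= #|[set c in R | ~~ e t c]|.
  apply: subset_leq_card; apply/subsetP => c; rewrite !inE => /andP[euc evc].
  rewrite euc andbT negb_or -andbA; apply/and3P; split.
  - by apply: contraTneq evc => ->; rewrite eirr.
  - by apply: contraNneq nevt => <-.
  - apply/negP => etc; have : c \in N t :&: N v by rewrite !inE etc evc.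
    by rewrite Mu inE => /eqP cu; rewrite cu eirr in euc.
have := card_nbhd_split eirr euv; rewrite nbhd_card /anti_deg; lia.
Qed.

Lemma common_nbr_anti_deg_ge t v u : t != v -> ~~ e v t -> u \in N t :&: N v ->
  (k - #|N t :&: N v|).+1 <=
    #|[set c in N t :\: (N t :&: N v) | ~~ e u c]| + anti_deg e (N v) u.
Proof.
move=> tv nevt uM; set M := N t :&: N v.
have /setIP[eut euv] := uM; rewrite inE esym in eut; rewrite inE esym in euv.
rewrite -anti_deg_nbhdC //.
have t_anti : t \in anti_nbrs e (N u) v by rewrite !inE eut tv nevt.
have card_rest : #|N t :\: M| = k - #|M|.
  by rewrite -(nbhd_card t) -(cardsID M (N t)) (setIidPr (subsetIl _ _)) addKn.
have rest_nonadj : #|(N t :\: M) :\: N u| = #|[set c in N t :\: M | ~~ e u c]|.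
  by apply: eq_card => c; rewrite !inE; case: (e u c); case: (e t c); case: (e v c).
have rest_adj : #|(N t :\: M) :&: N u| <= #|anti_nbrs e (N u) v :\ t|.
  apply: subset_leq_card; apply/subsetP => c; rewrite !inE.
  case/andP=> /andP[cM etc] euc; rewrite euc /=.
  have nevc : ~~ e v c by move: cM; rewrite etc.
  rewrite nevc andbT; apply/andP; split.
    by apply: contraTneq etc => ->; rewrite eirr.
  by apply: contraNneq nevt => <-; rewrite esym.
have := cardsID (N u) (N t :\: M); have := cardsD1 t (anti_nbrs e (N u) v).
rewrite t_anti /anti_deg; lia.
Qed.

Lemma anti_vol_ge_common_nbhd t v : t != v -> ~~ e v t ->
  #|N t :&: N v| * (k - #|N t :&: N v|).+1 <= q.
Proof.
move=> tv nevt; set M := N t :&: N v.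
have bound_t := anti_vol_sub esym (subsetIl (N t) (N v)).
have bound_v := anti_vol_sub esym (subsetIr (N t) (N v)).
rewrite !anti_vol_nbhd -/M in bound_t bound_v.
have : \sum_(u in M) (k - #|M|).+1 <=
       \sum_(u in M) (#|[set c in N t :\: M | ~~ e u c]| + anti_deg e (N v) u).
  by apply: leq_sum => u; apply: common_nbr_anti_deg_ge.
rewrite sum_nat_const big_split /= sum_anti_deg_sub ?subsetIr //.
rewrite -/(anti_cross e M (N t :\: M)); lia.
Qed.

Lemma anti_vol_nbhd_uniform v u :
  (forall t, t != v -> ~~ e v t -> N t :&: N v != set0 -> N v \subset N t) ->
  u \in N v -> q = k * anti_deg e (N v) u.
Proof.
move=> full uNv.
have anti_sub u1 u2 : u1 \in N v -> u2 \in N v ->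
    anti_nbrs e (N u1) v \subset anti_nbrs e (N u2) v.
  move=> u1v u2v; apply/subsetP => w; rewrite !inE => /and3P[eu1w wv nevw].
  rewrite wv nevw andbT /=.
  have /subsetP/(_ u2 u2v) : N v \subset N w.
    by apply: full wv nevw _; apply/set0Pn; exists u1; rewrite inE u1v andbT inE esym.
  by rewrite inE esym andbT.
have const u' : u' \in N v -> anti_deg e (N v) u' = anti_deg e (N v) u.
  have eN w : w \in N v -> e w v by rewrite inE esym.
  move=> u'v; rewrite -(anti_deg_nbhdC (eN u' u'v)) -(anti_deg_nbhdC (eN u uNv)).
  by apply/eqP; rewrite eqn_leq !subset_leq_card // anti_sub.
by rewrite -(anti_vol_nbhd v) /anti_vol (eq_bigr _ const) sum_nat_const nbhd_card.
Qed.

Lemma anti_vol_nbhd_ge : 0 < #|T| -> odd k -> 0 < q -> 2 * k.-1 <= q.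
Proof.
move=> /card_gt0P[v _] odd_k q_gt0.
case: (boolP [exists t, [&& t != v, ~~ e v t, 0 < #|N t :&: N v| & #|N t :&: N v| < k]])
  => [/existsP[t /and4P[tv nevt m_gt0 m_ltk]] | /existsPn no_partial].
  case: (eqVneq #|N t :&: N v| 1) => [/eqP/cards1P[u Mu] | m_neq1].
    exact: anti_vol_ge_common_nbhd1 tv nevt Mu.
  apply: leq_trans (anti_vol_ge_common_nbhd tv nevt); nia.
have full t : t != v -> ~~ e v t -> N t :&: N v != set0 -> N v \subset N t.
  move=> tv nevt /set0Pn/card_gt0P m_gt0.
  move: (no_partial t); rewrite tv nevt m_gt0 /= -leqNgt -(nbhd_card v) => m_full.
  have /eqP defNv : N t :&: N v == N v by rewrite eqEcard subsetIr.
  by rewrite -defNv subsetIl.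
have [u uNv] : exists u, u \in N v.
  apply/set0Pn; apply: contraTneq q_gt0 => Nv0.
  by rewrite -(anti_vol_nbhd v) Nv0 /anti_vol big_set0.
have q_eq := anti_vol_nbhd_uniform full uNv.
have := anti_vol_even esym (N v); rewrite anti_vol_nbhd q_eq oddM odd_k /= => even_d.
have d_ge2 : 2 <= anti_deg e (N v) u.
  by move: q_gt0 even_d; rewrite q_eq muln_gt0 => /andP[_]; case: anti_deg => [|[]].
have := leq_mul (leqnn k) d_ge2; lia.
Qed.

End Regular.

Lemma I2_neqE (i j : 'I_2) : (j != i) = (j == lift i ord0).
Proof.
case: (unliftP i j) => [k -> | ->]; first by rewrite (ord1 k) eqxx eq_sym neq_lift.
by rewrite eqxx (negbTE (neq_lift _ _)).
Qed.

Lemma complete_params n : has_params (complete_rel n.+1) n 'C(n, 2).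
Proof.
move=> v; have Nv : nbhd (complete_rel n.+1) v = [set~ v].
  by apply/setP => w; rewrite !inE eq_sym.
by rewrite /degree k3_degreeE Nv card_edges_in_clique ?cardsC1 ?card_ord.
Qed.

Lemma cart_params n : 0 < n ->
  has_params (cart_rel (complete_rel n) (complete_rel 2)) n 'C(n.-1, 2).
Proof.
move=> n_gt0 [a i]; set e := cart_rel _ _; set i' := lift i ord0.
set layer := setX [set~ a] [set i].
have Nai : nbhd e (a, i) = (a, i') |: layer.
  apply/setP => -[b j]; rewrite !inE /e /cart_rel /complete_rel /= xpair_eqE /i' -I2_neqE.
  by rewrite (eq_sym a b) (eq_sym i j) [(j == i) && _]andbC.
have layer_clique : clique e layer.
  move=> [b j] [c l]; rewrite !inE /= => /andP[_ /eqP->] /andP[_ /eqP->] ne.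
  by rewrite /e /cart_rel /complete_rel /= eqxx andbF; apply: contraNneq ne => ->.
have i'_isolated : {in layer, forall y, ~~ e (a, i') y}.
  move=> [b j]; rewrite !inE /= => /andP[ba /eqP->].
  rewrite /e /cart_rel /complete_rel /= eq_sym (negbTE ba) /i'.
  by rewrite eq_sym (negbTE (neq_lift _ _)).
have card_layer : #|layer| = n.-1 by rewrite cardsX cardsC1 cards1 card_ord muln1.
rewrite /degree k3_degreeE Nai edges_in_setU1_isolated // card_edges_in_clique //.
by rewrite cardsU1 card_layer !inE eqxx add1n prednK.
Qed.

Theorem corollary5p2 (r2 : nat) (Hodd : odd r2) (H3 : 3 <= r2) :
  (forall (r3 : nat), 'C(r2.-1, 2) < r3 < 'C(r2, 2) ->
     forall (T : finType) (e : rel T), 0 < #|T| -> simple_graph e ->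
       ~ has_params e r2 r3)
  /\ has_params (complete_rel r2.+1) r2 'C(r2, 2)
  /\ has_params (cart_rel (complete_rel r2) (complete_rel 2)) r2 'C(r2.-1, 2).
Proof.
split; last split; [| exact: complete_params | apply: cart_params; lia].
move=> r3 /andP[lo hi] T e T_gt0 [esym eirr] params.
have deg x : #|nbhd e x| = r2 by case: (params x).
have anti_volE x : anti_vol e (nbhd e x) = r2 * r2.-1 - 2 * r3.
  have := anti_vol_edges_in esym (nbhd e x).
  by rewrite -k3_degreeE deg; case: (params x) => _ ->; lia.
have := anti_vol_nbhd_ge esym eirr deg anti_volE T_gt0 Hodd.
have twiceC := mul_bin_diag r2 1; rewrite bin1 in twiceC.
have pascal : 'C(r2, 2) = 'C(r2.-1, 2) + r2.-1.
  by rewrite -{1}(prednK (ltnW (ltnW H3))) binS bin1.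
lia.
Qed.
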